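(* Let $\varphi\colon\mathcal{M}\to\mathcal{X}$ be a smooth lift of the form $\varphi(\lambda,Y_1,\dots,Y_d)=\sum_{i=1}^r\lambda_i\,(Y_1)_{:,i}\otimes\cdots\otimes(Y_d)_{:,i}$, where $\mathcal{M}$ is a smooth embedded submanifold of $\mathbb{R}^r\times\mathbb{R}^{n_1\times r}\times\cdots\times\mathbb{R}^{n_d\times r}$. Let $(\lambda,Y_1,\dots,Y_d)\in\mathcal{M}$ and $X=\varphi(\lambda,Y_1,\dots,Y_d)$, and suppose $\mathrm{col}(Y_1)^\perp\otimes\cdots\otimes\mathrm{col}(Y_d)^\perp\not\subseteq(\mathrm{T}_X\mathcal{X})^*$. If $d\ge3$, then $\varphi$ does not satisfy ''2 $\Rightarrow$ 1'' at $(\lambda,Y_1,\dots,Y_d)$. If $d=2$ and $\lambda=0$, then $\varphi$ does not satisfy ''2 $\Rightarrow$ 1'' at $(0,Y_1,Y_2)$.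
   Context: $(Y)_{:,i}$ is the $i$-th column of $Y$; $\otimes$ is the tensor (outer) product, with values in $\mathbb{R}^{n_1\times\cdots\times n_d}$ equipped with the standard inner product; $\mathrm{col}(Y_j)^\perp\subseteq\mathbb{R}^{n_j}$ is the orthogonal complement of the column space, and $\mathrm{col}(Y_1)^\perp\otimes\cdots\otimes\mathrm{col}(Y_d)^\perp$ is the linear span of the tensors $u_1\otimes\cdots\otimes u_d$ with $u_j\in\mathrm{col}(Y_j)^\perp$. $\mathcal{X}=\varphi(\mathcal{M})$. Tangent cone $\mathrm{T}_X\mathcal{X}=\{\lim(X_i-X)/\tau_i: X_i\in\mathcal{X},\tau_i>0,\tau_i\to0\}$; $K^*=\{U:\langle U,V\rangle\ge0\ \forall V\in K\}$. For $g=f\circ\varphi$, $y$ is 2-critical if $(g\circ c)'(0)=0$ and $(g\circ c)''(0)\ge0$ for all smooth curves $c$ in $\mathcal{M}$ with $c(0)=y$. ''2 $\Rightarrow$ 1'' at $y$: for every twice differentiable $f$ on $\mathbb{R}^{n_1\times\cdots\times n_d}$, if $y$ is 2-critical for $f\circ\varphi$ then $\varphi(y)$ is stationary, i.e., $\nabla f(\varphi(y))\in(\mathrm{T}_{\varphi(y)}\mathcal{X})^*$. *)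

From HB Require Import structures.
From mathcomp Require Import all_boot all_order all_algebra.
From mathcomp Require Import all_classical all_reals all_analysis.
Set Implicit Arguments. Unset Strict Implicit. Unset Printing Implicit Defensive.
Import Order.TTheory GRing.Theory Num.Theory.
Import numFieldNormedType.Exports.
Local Open Scope classical_set_scope.
Local Open Scope ring_scope.

Section Defs.
Variable R : realType.

(* A finite-dimensional Euclidean space with coordinates indexed by a finType
   I is represented as 'rV[R]_#|I|; coordinate i is  X 0 (enum_rank i). *)
Definition coord {I : finType} (X : 'rV[R]_#|I|) (i : I) : R := X 0 (enum_rank i).
Definition mkvec {I : finType} (F : I -> R) : 'rV[R]_#|I| :=
  \row_k F (enum_val k).

Definition inner {N : nat} (U V : 'rV[R]_N) : R := \sum_k U 0 k * V 0 k.

Fixpoint Ck {N : nat} {W : normedModType R} (k : nat) (h : 'rV[R]_N -> W) : Prop :=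
  match k with
  | 0 => continuous h
  | k'.+1 => (forall x, differentiable h x) /\
             forall p : 'I_N, Ck k' (fun x => 'D_(delta_mx 0 p) h x)
  end.
Definition smooth {N : nat} {W : normedModType R} (h : 'rV[R]_N -> W) :=
  forall k, Ck k h.

Definition smooth_curve {W : normedModType R} (c : R -> W) :=
  forall (k : nat) (t : R), derivable (derive1n k c) t 1.

Definition grad {N : nat} (f : 'rV[R]_N -> R) (X : 'rV[R]_N) : 'rV[R]_N :=
  \row_p 'D_(delta_mx 0 p) f X.

Definition twice_differentiable {N : nat} (f : 'rV[R]_N -> R) :=
  (forall X, differentiable f X) /\ (forall X, differentiable (grad f) X).

(* smooth embedded submanifold of R^N: locally a regular level set of a
   smooth map *)
Definition embedded_submanifold {N : nat} (M : set 'rV[R]_N) :=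
  forall y, M y -> exists U : set 'rV[R]_N, open U /\ U y /\
    exists (k : nat) (h : 'rV[R]_N -> 'rV[R]_k), smooth h /\
      (forall x, U x -> (M x <-> h x = 0)) /\
      (forall x, U x -> forall w, exists v, 'd h x v = w).

Definition tangent_cone {N : nat} (S : set 'rV[R]_N) (X : 'rV[R]_N) : set 'rV[R]_N :=
  [set V | exists (Xs : nat -> 'rV[R]_N) (tau : nat -> R),
     (forall i, S (Xs i)) /\ (forall i, 0 < tau i) /\
     tau @ \oo --> 0 /\
     (fun i => (tau i)^-1 *: (Xs i - X)) @ \oo --> V].

Definition dual_cone {N : nat} (K : set 'rV[R]_N) : set 'rV[R]_N :=
  [set U | forall V, K V -> 0 <= inner U V].

Section Tensor.
Variables (d r : nat) (n : 'I_d -> nat).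

(* multi-indices of R^{n_1 x ... x n_d} *)
Local Notation tidx := ({dffun forall j : 'I_d, 'I_(n j)}).
Definition tensor := 'rV[R]_#|{: tidx}|.

(* coordinates of R^r x R^{n_1 x r} x ... x R^{n_d x r} *)
Local Notation pidx := (('I_r + {j : 'I_d & ('I_(n j) * 'I_r)%type})%type).
Definition param := 'rV[R]_#|{: pidx}|.

Definition lam (y : param) (i : 'I_r) : R := coord y (inl i).
Definition Ymat (y : param) (j : 'I_d) (a : 'I_(n j)) (i : 'I_r) : R :=
  coord y (inr (existT _ j (a, i))).

Definition phi (y : param) : tensor :=
  mkvec (fun a : tidx => \sum_(i < r) lam y i * \prod_(j < d) @Ymat y j (a j) i).

Definition outer (u : forall j : 'I_d, 'I_(n j) -> R) : tensor :=
  mkvec (fun a : tidx => \prod_(j < d) u j (a j)).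

Definition in_col_perp (y : param) (j : 'I_d) (u : 'I_(n j) -> R) :=
  forall i : 'I_r, \sum_(a < n j) u a * @Ymat y j a i = 0.

(* col(Y_1)^perp o ... o col(Y_d)^perp : linear span of elementary tensors *)
Definition perp_tensor_span (y : param) : set tensor :=
  [set W | exists (m : nat) (coef : 'I_m -> R)
             (u : 'I_m -> forall j : 'I_d, 'I_(n j) -> R),
     (forall k j, @in_col_perp y j (u k j)) /\
     W = \sum_(k < m) coef k *: outer (u k)].

Definition two_critical (M : set param) (f : tensor -> R) (y : param) :=
  forall c : R -> param, smooth_curve c -> (forall t, M (c t)) -> c 0 = y ->
    derive1 (f \o phi \o c) 0 = 0 /\ 0 <= derive1n 2 (f \o phi \o c) 0.

Definition stationary (Xset : set tensor) (f : tensor -> R) (X : tensor) :=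
  dual_cone (tangent_cone Xset X) (grad f X).

Definition two_implies_one (M : set param) (y : param) :=
  forall f : tensor -> R, twice_differentiable f ->
    two_critical M f y -> stationary (phi @` M) f (phi y).

End Tensor.
End Defs.

From HB Require Import structures.
From mathcomp Require Import all_boot all_order all_algebra.
From mathcomp Require Import all_classical all_reals all_analysis.
From mathcomp Require Import ring.
Set Implicit Arguments. Unset Strict Implicit. Unset Printing Implicit Defensive.
Import Order.TTheory GRing.Theory Num.Theory.
Import numFieldNormedType.Exports.
Local Open Scope classical_set_scope.
Local Open Scope ring_scope.

(* Pick W in col(Y_1)^perp (x) ... (x) col(Y_d)^perp outside the dual of the tangent
   cone at phi(y), and let f = <W, .>, so that grad f = W and phi(y) is not stationary.
   For an elementary tensor u_1 (x) ... (x) u_d of that space,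
   <u, phi(z)> = sum_i lambda_i prod_j <u_j, (Y_j)_{:,i}>, and along any curve c through y
   every factor <u_j, (Y_j)_{:,i}> vanishes at time 0.  Each summand thus contains three
   factors vanishing at 0 (three of the d >= 3 pairings, or lambda_i and two pairings when
   lambda = 0), so f o phi o c has zero first and second derivatives at 0 and y is
   2-critical. *)

Section SecondOrderFlatness.
Variable R : realType.
Implicit Types f g h : R -> R.

Definition twice_derivable h :=
  (forall t, derivable h t 1) /\ (forall t, derivable (derive1 h) t 1).

Lemma derive1M f g : (forall t, derivable f t 1) -> (forall t, derivable g t 1) ->
  derive1 (f * g) = f * derive1 g + g * derive1 f.
Proof. by move=> df dg; apply/funext => t; rewrite derive1E deriveM // -!derive1E. Qed.

Lemma derive1D f g : (forall t, derivable f t 1) -> (forall t, derivable g t 1) ->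
  derive1 (f + g) = derive1 f + derive1 g.
Proof. by move=> df dg; apply/funext => t; rewrite derive1E deriveD // -!derive1E. Qed.

Lemma twice_derivable_cst k : twice_derivable (cst k).
Proof.
have D0 : derive1 (cst k) = cst 0 :> (R -> R) by apply/funext => t; rewrite derive1_cst.
by split=> t; rewrite ?D0; apply: derivable_cst.
Qed.

Lemma twice_derivableD f g :
  twice_derivable f -> twice_derivable g -> twice_derivable (f + g).
Proof.
move=> [df df'] [dg dg']; split=> t; first exact: derivableD (df t) (dg t).
rewrite (derive1D df dg); exact: derivableD (df' t) (dg' t).
Qed.

Lemma twice_derivableM f g :
  twice_derivable f -> twice_derivable g -> twice_derivable (f * g).
Proof.
move=> [df df'] [dg dg']; split=> t; first exact: derivableM (df t) (dg t).
rewrite (derive1M df dg).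
exact: derivableD (derivableM (df t) (dg' t)) (derivableM (dg t) (df' t)).
Qed.

Lemma twice_derivable_sum (I : finType) (P : pred I) (F : I -> R -> R) :
  (forall i, twice_derivable (F i)) -> twice_derivable (fun t => \sum_(i | P i) F i t).
Proof.
move=> dF; rewrite -fct_sumE; apply: (big_ind twice_derivable).
- exact: twice_derivable_cst.
- exact: twice_derivableD.
- by move=> i _; apply: dF.
Qed.

Lemma twice_derivable_prod (I : finType) (P : pred I) (F : I -> R -> R) :
  (forall i, twice_derivable (F i)) -> twice_derivable (fun t => \prod_(i | P i) F i t).
Proof.
move=> dF; rewrite -fct_prodE; apply: (big_ind twice_derivable).
- exact: twice_derivable_cst.
- exact: twice_derivableM.
- by move=> i _; apply: dF.
Qed.

Lemma derive1n2M f g t : twice_derivable f -> twice_derivable g ->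
  derive1n 2 (f * g) t =
  derive1n 2 f t * g t + 2 * (derive1 f t * derive1 g t) + f t * derive1n 2 g t.
Proof.
move=> [df df'] [dg dg'].
have dfg' t' : derivable (f * derive1 g) t' 1 := derivableM (df t') (dg' t').
have dgf' t' : derivable (g * derive1 f) t' 1 := derivableM (dg t') (df' t').
rewrite !derive1nS !derive1n0 (derive1M df dg) (derive1D dfg' dgf').
rewrite (derive1M df dg') (derive1M dg df').
set f1 := derive1 f; set g1 := derive1 g; set f2 := derive1 f1; set g2 := derive1 g1.
change (f t * g2 t + g1 t * f1 t + (g t * f2 t + f1 t * g1 t) =
  f2 t * g t + 2 * (f1 t * g1 t) + f t * g2 t).
ring.
Qed.

Definition flat2 h :=
  twice_derivable h /\ [/\ h 0 = 0, derive1 h 0 = 0 & derive1n 2 h 0 = 0].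

Lemma flat2D f g : flat2 f -> flat2 g -> flat2 (f + g).
Proof.
move=> [[df df'] [f0 f1 f2]] [[dg dg'] [g0 g1 g2]].
split; first exact: twice_derivableD.
split.
- by rewrite !fctE /= f0 g0 addr0.
- by rewrite (derive1D df dg) !fctE /= f1 g1 addr0.
- rewrite !derive1nS !derive1n0 (derive1D df dg) (derive1D df' dg').
  by move: f2 g2; rewrite !derive1nS !derive1n0 addrfctE /= => -> ->; rewrite addr0.
Qed.

Lemma flat2_sum (I : finType) (P : pred I) (F : I -> R -> R) :
  (forall i, flat2 (F i)) -> flat2 (fun t => \sum_(i | P i) F i t).
Proof.
move=> fF; rewrite -fct_sumE; apply: (big_ind flat2); last 1 first.
- by move=> i _; apply: fF.
- have D0 : derive1 (cst 0) = cst 0 :> (R -> R).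
    by apply/funext => t; rewrite derive1_cst.
  by split; [exact: twice_derivable_cst | rewrite /= D0 D0].
- exact: flat2D.
Qed.

Lemma derive1M_eq0 f g : twice_derivable f -> twice_derivable g ->
  f 0 = 0 -> g 0 = 0 -> derive1 (f * g) 0 = 0.
Proof.
move=> [df _] [dg _] f0 g0; rewrite (derive1M df dg).
by rewrite !fctE /= f0 g0 !mul0r addr0.
Qed.

Lemma flat2M f g : twice_derivable f -> twice_derivable g ->
  f 0 = 0 -> derive1 f 0 = 0 -> g 0 = 0 -> flat2 (f * g).
Proof.
move=> df dg f0 f1 g0; split; first exact: twice_derivableM.
split; first by rewrite !fctE /= f0 mul0r.
- exact: derive1M_eq0.
- by rewrite (derive1n2M _ df dg) f0 f1 g0 !(mulr0, mul0r, addr0).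
Qed.

Lemma flat2Mr f g : flat2 f -> twice_derivable g -> flat2 (f * g).
Proof.
move=> [df [f0 f1 f2]] dg; split; first exact: twice_derivableM.
split; first by rewrite !fctE /= f0 mul0r.
- case: (df) (dg) => [df1 _] [dg1 _]; rewrite (derive1M df1 dg1).
  by rewrite !fctE /= f0 f1 !mul0r mulr0 addr0.
- by rewrite (derive1n2M _ df dg) f0 f1 f2 !(mulr0, mul0r, addr0).
Qed.

Lemma flat2_mul_prod (I : finType) (i0 i1 : I) (g : R -> R) (F : I -> R -> R) :
  i0 != i1 -> (g 0 = 0 \/ exists2 i2, i2 != i0 & i2 != i1) ->
  twice_derivable g -> (forall i, twice_derivable (F i)) -> (forall i, F i 0 = 0) ->
  flat2 (fun t => g t * \prod_i F i t).
Proof.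
move=> i01 third dg dF F0.
pose Q := F i0 * F i1.
pose rest t := \prod_(i | (i != i0) && (i != i1)) F i t.
have dQ : twice_derivable Q := twice_derivableM (dF i0) (dF i1).
have Q0 : Q 0 = 0 by rewrite /Q !fctE /= F0 mul0r.
have Q1 : derive1 Q 0 = 0 := derive1M_eq0 (dF i0) (dF i1) (F0 i0) (F0 i1).
have drest : twice_derivable rest := twice_derivable_prod _ dF.
have split01 t : \prod_i F i t = Q t * rest t.
  by rewrite (bigD1 i0) // (bigD1 i1) 1?eq_sym //= mulrA.
case: third => [g0 | [i2 i20 i21]].
- have -> : (fun t => g t * \prod_i F i t) = Q * g * rest.
    by apply/funext => t; rewrite split01 !fctE /= mulrCA mulrA.
  exact: flat2Mr (flat2M dQ dg Q0 Q1 g0) drest.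
- have rest0 : rest 0 = 0.
    by rewrite /rest (bigD1 i2) ?i20 ?i21 //= F0 mul0r.
  have -> : (fun t => g t * \prod_i F i t) = Q * rest * g.
    by apply/funext => t; rewrite split01 !fctE /= mulrC.
  exact: flat2Mr (flat2M dQ drest Q0 Q1 rest0) dg.
Qed.

End SecondOrderFlatness.

Section Euclidean.
Variable R : realType.

Lemma twice_derivable_curve_entry (N : nat) (c : R -> 'rV[R]_N) (q : 'I_N) :
  smooth_curve c -> twice_derivable (fun t => c t 0 q).
Proof.
move=> sc.
have dc : forall t, derivable c t 1 := sc 0%N.
have dc' : forall t, derivable (derive1 c) t 1 := sc 1%N.
have E : derive1 (fun t => c t 0 q) = fun t => derive1 c t 0 q.
  by apply/funext => t; rewrite !derive1E (derive_mx (dc t)) mxE.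
split=> t; first exact: (derivable_mxP _ _ _).1 (dc t) 0 q.
by rewrite E; exact: (derivable_mxP _ _ _).1 (dc' t) 0 q.
Qed.

Lemma derive_entry (N : nat) (X v : 'rV[R]_N) (k : 'I_N) :
  'D_v (fun Z : 'rV[R]_N => Z 0 k) X = v 0 k.
Proof.
have := derive_mx (@derivable_id _ _ X v).
by rewrite derive_id => /(congr1 (fun Z : 'rV[R]_N => Z 0 k)); rewrite mxE.
Qed.

Lemma inner_fctE (N : nat) (W : 'rV[R]_N) :
  inner W = \sum_(k < N) (fun X : 'rV[R]_N => W 0 k * X 0 k).
Proof. by rewrite fct_sumE. Qed.

Lemma grad_inner (N : nat) (W X : 'rV[R]_N) : grad (inner W) X = W.
Proof.
have dWk k v : derivable (fun Z : 'rV[R]_N => W 0 k * Z 0 k) X v.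
  exact: derivableM (derivable_cst _ _ _) (diff_derivable (differentiable_coord X 0 k)).
apply/rowP => p; rewrite mxE inner_fctE derive_sum; last by move=> k; exact: dWk.
under eq_bigr => k _.
  rewrite (deriveMl (W 0 k) (diff_derivable (differentiable_coord X 0 k))) derive_entry mxE.
  over.
rewrite (bigD1 p) //= eqxx mulr1 big1 ?addr0 // => k kp.
by rewrite (negbTE kp) mulr0.
Qed.

Lemma twice_differentiable_inner (N : nat) (W : 'rV[R]_N) :
  twice_differentiable (inner W).
Proof.
split=> X.
  rewrite inner_fctE; apply: differentiable_sum => k.
  exact: differentiableM (differentiable_cst _ _) (differentiable_coord X 0 k).
have -> : grad (inner W) = cst W by apply/funext => Y; exact: grad_inner.
exact: differentiable_cst.
Qed.

Lemma inner_sumZl (N m : nat) (a : 'I_m -> R) (U : 'I_m -> 'rV[R]_N) (V : 'rV[R]_N) :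
  inner (\sum_(k < m) a k *: U k) V = \sum_(k < m) a k * inner (U k) V.
Proof.
rewrite /inner; under eq_bigr do rewrite summxE big_distrl /=.
rewrite exchange_big; apply: eq_bigr => k _; rewrite big_distrr /=.
by apply: eq_bigr => q _; rewrite mxE mulrA.
Qed.

End Euclidean.

Lemma bigA_distr_dffun (K : comPzRingType) (I : finType) (T_ : I -> finType)
    (F : forall i, T_ i -> K) :
  \prod_(i : I) \sum_(b : T_ i) F i b =
  \sum_(a : {dffun forall i, T_ i}) \prod_(i : I) F i (a i).
Proof.
pose P_ i := [ffun b : T_ i => F i b].
transitivity (\prod_i \sum_(x | tagged_with T_ i x) untag 0 (P_ i) x).
  apply: eq_bigr => i _.
  transitivity (\sum_(b : T_ i) P_ i b); first by apply: eq_bigr => b _; rewrite ffunE.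
  by rewrite (big_tag P_ i); apply: eq_bigl.
rewrite bigA_distr_big_dep -big_fprod.
rewrite (reindex (@fprod_of_dffun _ T_)); last exact/onW_bij/fprod_of_dffun_bij.
by apply: eq_bigr => a _; apply: eq_bigr => i _; rewrite ffunE /fprod_of_dffun fprodE.
Qed.

Section TensorPairing.
Variables (R : realType) (d r : nat) (n : 'I_d -> nat).
Implicit Types (y z : param R r n) (c : R -> param R r n).

Lemma inner_outer_phi (u : forall j : 'I_d, 'I_(n j) -> R) z :
  inner (outer u) (phi z) =
  \sum_(i < r) lam z i * \prod_(j < d) \sum_(a < n j) u j a * Ymat z a i.
Proof.
rewrite /inner; under eq_bigr do rewrite /outer /phi /mkvec !mxE.
rewrite -(big_enum_val (fun a : {dffun forall j : 'I_d, 'I_(n j)} =>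
  (\prod_(j < d) u j (a j)) * \sum_(i < r) lam z i * \prod_(j < d) Ymat z (a j) i)).
rewrite (eq_bigl (fun _ => true)) //.
under eq_bigr do rewrite big_distrr /=.
rewrite exchange_big /=; apply: eq_bigr => i _.
under eq_bigr do rewrite mulrCA -big_split /=.
by rewrite -big_distrr /= (bigA_distr_dffun (fun j b => u j b * Ymat z b i)).
Qed.

Lemma flat2_inner_outer_perp y (u : forall j : 'I_d, 'I_(n j) -> R) c :
  (forall j, in_col_perp y (u j)) -> smooth_curve c -> c 0 = y ->
  (1 < d)%N -> (2 < d)%N \/ (forall i, lam y i = 0) ->
  flat2 (fun t => inner (outer u) (phi (c t))).
Proof.
move=> perp sc c0 d1 d2_or_lam0.
have -> : (fun t => inner (outer u) (phi (c t))) = fun t =>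
    \sum_(i < r) lam (c t) i * \prod_(j < d) \sum_(a < n j) u j a * Ymat (c t) a i.
  by apply/funext => t; exact: inner_outer_phi.
apply: flat2_sum => i.
apply: (@flat2_mul_prod _ _ (Ordinal (ltnW d1)) (Ordinal d1)).
- by [].
- case: d2_or_lam0 => [d2 | lam0]; first by right; exists (Ordinal d2).
  by left; rewrite -c0 in lam0; exact: lam0 i.
- exact: twice_derivable_curve_entry.
- move=> j; apply: twice_derivable_sum => a.
  apply: (@twice_derivableM R (cst (u j a)) (fun t => Ymat (c t) a i)).
  + exact: twice_derivable_cst.
  + exact: twice_derivable_curve_entry.
- by move=> j; rewrite -c0 in perp; exact: perp j i.
Qed.

Lemma flat2_inner_perp_span y (W : tensor R n) c :
  perp_tensor_span y W -> smooth_curve c -> c 0 = y ->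
  (1 < d)%N -> (2 < d)%N \/ (forall i, lam y i = 0) ->
  flat2 (fun t => inner W (phi (c t))).
Proof.
move=> [m [coef [u [perp ->]]]] sc c0 d1 d2_or_lam0.
have -> : (fun t => inner (\sum_(k < m) coef k *: outer (u k)) (phi (c t))) =
    fun t => \sum_(k < m) inner (outer (u k)) (phi (c t)) * coef k.
  by apply/funext => t; rewrite inner_sumZl; under eq_bigr do rewrite mulrC.
apply: flat2_sum => k.
apply: (@flat2Mr R (fun t => inner (outer (u k)) (phi (c t))) (cst (coef k))).
- exact: flat2_inner_outer_perp.
- exact: twice_derivable_cst.
Qed.

Lemma two_critical_of_flat2 (M : set (param R r n)) (f : tensor R n -> R) y :
  (forall c, smooth_curve c -> (forall t, M (c t)) -> c 0 = y ->
     flat2 (fun t => f (phi (c t)))) ->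
  two_critical M f y.
Proof. by move=> flat c sc Mc c0; have [_ [_ -> ->]] := flat c sc Mc c0. Qed.

End TensorPairing.

Theorem proposition5p2 (R : realType) (d r : nat) (n : 'I_d -> nat)
  (M : set (param R r n)) (y : param R r n) :
  embedded_submanifold M -> M y ->
  ~ (perp_tensor_span y `<=` dual_cone (tangent_cone ((@phi R d r n) @` M) (phi y))) ->
  ((3 <= d)%N -> ~ two_implies_one M y) /\
  (d = 2%N -> (forall i, lam y i = 0) -> ~ two_implies_one M y).
Proof.
(* Flatness holds along every smooth curve through y. *)
move=> _ _ /existsNP[W /not_implyP[spanW notdual]].
have not_2to1 : (1 < d)%N -> (2 < d)%N \/ (forall i, lam y i = 0) -> ~ two_implies_one M y.
  move=> d1 d2_or_lam0 two_to_one; apply: notdual.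
  rewrite -(grad_inner W (phi y)); apply: two_to_one; first exact: twice_differentiable_inner.
  apply: two_critical_of_flat2 => c sc _ c0.
  exact: flat2_inner_perp_span spanW sc c0 d1 d2_or_lam0.
split=> [d3 | d2 lam0]; apply: not_2to1.
- exact: ltnW.
- by left.
- by rewrite d2.
- by right.
Qed.
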